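(* Let $M,N$ be weight sequences satisfying $m_k^{1/k}\to\infty$ and $n_k^{1/k}\to\infty$. Assume that there exists $C\ge1$ such that $\mu_j/j\le C\nu_k/k$ for all $1\le j\le k$. Then for all $t>0$, $\overline{\Gamma}_n(Ct)\le\underline{\Gamma}_m(t)$.
   Context: A weight sequence is given by an increasing sequence $1=\mu_0\le\mu_1\le\mu_2\le\cdots$ via $M_k=\mu_0\mu_1\cdots\mu_k=k!\,m_k$, with $M_k^{1/k}\to\infty$; analogously $\nu\leftrightarrow N\leftrightarrow n$. For a positive sequence $m$ with $m_0=1$ and $m_k^{1/k}\to\infty$ define $h_m(t)=\inf_{k\in\mathbb{N}}m_kt^k$ ($t>0$), $\overline{\Gamma}_m(t)=\min\{k: h_m(t)=m_kt^k\}$, and, if $m_{k+1}/m_k\to\infty$, $\underline{\Gamma}_m(t)=\min\{k: m_{k+1}/m_k\ge 1/t\}$. (Under the hypotheses, $m_{k+1}/m_k=\mu_{k+1}/(k+1)\to\infty$, so these are well defined.) *)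

From Stdlib Require Import Reals Lra Lia Arith Factorial Classical ClassicalEpsilon.
Open Scope R_scope.

Fixpoint Mseq (mu : nat -> R) (k : nat) : R :=
  match k with
  | O => mu O
  | S k' => Mseq mu k' * mu (S k')
  end.

Definition mseq (mu : nat -> R) (k : nat) : R := Mseq mu k / INR (fact k).

Definition root_to_infty (u : nat -> R) : Prop :=
  cv_infty (fun k => Rpower (u k) (/ INR k)).

Definition weight_sequence (mu : nat -> R) : Prop :=
  mu O = 1 /\ (forall k, mu k <= mu (S k)) /\ root_to_infty (Mseq mu).

Definition is_inf_seq (u : nat -> R) (l : R) : Prop :=
  (forall k, l <= u k) /\ (forall b, (forall k, b <= u k) -> b <= l).

Definition h_fun (m : nat -> R) (t : R) : R :=
  epsilon (inhabits 0) (fun l => is_inf_seq (fun k => m k * t ^ k) l).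

Definition Gamma_bar (m : nat -> R) (t : R) : nat :=
  epsilon (inhabits O)
    (fun k => h_fun m t = m k * t ^ k /\
              (forall j, h_fun m t = m j * t ^ j -> (k <= j)%nat)).

Definition Gamma_under (m : nat -> R) (t : R) : nat :=
  epsilon (inhabits O)
    (fun k => m (S k) / m k >= / t /\
              (forall j, m (S j) / m j >= / t -> (k <= j)%nat)).

(* From the index k0 = Gamma_under m t on, the hypothesis gives
   nu_(i+1)/(i+1) * C t >= mu_(k0+1)/(k0+1) * t >= 1, so the sequence
   n_i (C t)^i is nondecreasing for i >= k0.  Its infimum is therefore a
   minimum attained among the indices 0..k0, and the least minimizer
   Gamma_bar n (C t) is at most k0. *)

From Stdlib Require Import Reals Lra Lia Arith Classical ClassicalEpsilon Factorial.
Open Scope R_scope.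

Lemma least_witness (P : nat -> Prop) (n : nat) :
  P n -> exists m, P m /\ forall j, P j -> (m <= j)%nat.
Proof.
  revert P; induction n as [n IH] using lt_wf_ind; intros P Pn.
  destruct (classic (exists j, (j < n)%nat /\ P j)) as [[j [Hjn Pj]] | Hnone].
  - exact (IH j Hjn P Pj).
  - exists n; split; [exact Pn |].
    intros j Pj; destruct (Nat.lt_ge_cases j n) as [Hjn | Hnj]; [| exact Hnj].
    exfalso; apply Hnone; eauto.
Qed.

Lemma finite_argmin (a : nat -> R) (n : nat) :
  exists k, (k <= n)%nat /\ forall j, (j <= n)%nat -> a k <= a j.
Proof.
  induction n as [| n [k [Hkn Hmin]]].
  - exists O; split; [lia |]; intros j Hj; replace j with O by lia; lra.
  - destruct (Rle_or_lt (a k) (a (S n))) as [Hle | Hlt].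
    + exists k; split; [lia |]; intros j Hj.
      destruct (Nat.eq_dec j (S n)) as [-> | Hne]; [exact Hle | apply Hmin; lia].
    + exists (S n); split; [lia |]; intros j Hj.
      destruct (Nat.eq_dec j (S n)) as [-> | Hne]; [lra |].
      specialize (Hmin j ltac:(lia)); lra.
Qed.

Lemma argmin_of_nondecreasing_from (a : nat -> R) (n : nat) :
  (forall i, (n <= i)%nat -> a i <= a (S i)) ->
  exists k, (k <= n)%nat /\ forall j, a k <= a j.
Proof.
  intros Hmono.
  assert (Htail : forall d, a n <= a (n + d)%nat).
  { induction d as [| d IHd]; [rewrite Nat.add_0_r; lra |].
    rewrite Nat.add_succ_r; specialize (Hmono (n + d)%nat ltac:(lia)); lra. }
  destruct (finite_argmin a n) as [k [Hkn Hmin]].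
  exists k; split; [exact Hkn |]; intros j.
  destruct (Nat.le_gt_cases j n) as [Hjn | Hnj]; [exact (Hmin j Hjn) |].
  replace j with (n + (j - n))%nat by lia.
  specialize (Hmin n (le_n n)); specialize (Htail (j - n)%nat); lra.
Qed.

Lemma root_to_infty_gt_pow (u : nat -> R) (q : R) :
  root_to_infty u -> (forall k, 0 < u k) -> 0 < q -> exists k, q ^ k < u k.
Proof.
  intros Hroot Hpos Hq.
  destruct (Hroot q) as [N HN].
  set (k := Nat.max N 1); specialize (HN k ltac:(unfold k; lia)).
  assert (Hk : 0 < INR k) by (apply lt_0_INR; unfold k; lia).
  exists k; apply Rnot_le_lt; intros Hle.
  assert (Hroot_le : Rpower (u k) (/ INR k) <= Rpower (q ^ k) (/ INR k)).
  { apply Rle_Rpower_l; [left; apply Rinv_0_lt_compat, Hk | split; [apply Hpos | exact Hle]]. }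
  rewrite <- Rpower_pow, Rpower_mult, Rinv_r, Rpower_1 in Hroot_le by lra.
  lra.
Qed.

Section WeightSequence.

Variable mu : nat -> R.
Hypothesis Hmu : weight_sequence mu.

Lemma weight_sequence_ge1 k : 1 <= mu k.
Proof.
  destruct Hmu as [H0 [Hmono _]].
  induction k as [| k IHk]; [lra | specialize (Hmono k); lra].
Qed.

Lemma Mseq_pos k : 0 < Mseq mu k.
Proof.
  induction k as [| k IHk]; simpl.
  - pose proof (weight_sequence_ge1 O); lra.
  - pose proof (weight_sequence_ge1 (S k)); nra.
Qed.

Lemma mseq_pos k : 0 < mseq mu k.
Proof.
  apply Rdiv_lt_0_compat; [apply Mseq_pos | apply lt_0_INR, lt_O_fact].
Qed.

Lemma mseq_S k : mseq mu (S k) = mseq mu k * (mu (S k) / INR (S k)).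
Proof.
  unfold mseq; simpl Mseq.
  replace (fact (S k)) with (S k * fact k)%nat by reflexivity.
  rewrite mult_INR.
  assert (INR (fact k) <> 0) by (apply not_0_INR; pose proof (lt_O_fact k); lia).
  assert (INR (S k) <> 0) by (apply not_0_INR; lia).
  field; auto.
Qed.

Lemma mseq_ratio k : mseq mu (S k) / mseq mu k = mu (S k) / INR (S k).
Proof.
  rewrite mseq_S; pose proof (mseq_pos k).
  field; split; [apply not_0_INR; lia | lra].
Qed.

Lemma mseq_pow_le_succ (s : R) i :
  0 < s -> 1 <= mu (S i) / INR (S i) * s ->
  mseq mu i * s ^ i <= mseq mu (S i) * s ^ S i.
Proof.
  intros Hs Hfactor.
  rewrite mseq_S; simpl pow.
  assert (0 < mseq mu i * s ^ i) by (apply Rmult_lt_0_compat; [apply mseq_pos | apply pow_lt, Hs]).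
  replace (mseq mu i * (mu (S i) / INR (S i)) * (s * s ^ i))
    with (mseq mu i * s ^ i * (mu (S i) / INR (S i) * s)) by ring.
  nra.
Qed.

(* Otherwise m_k <= t^-k for all k, contradicting m_k^(1/k) -> oo. *)
Lemma exists_ratio_ge_inv (t : R) :
  root_to_infty (mseq mu) -> 0 < t ->
  exists k, mseq mu (S k) / mseq mu k >= / t.
Proof.
  intros Hroot Ht; apply NNPP; intros Hnone.
  assert (Hsmall : forall k, mu (S k) / INR (S k) < / t).
  { intros k; rewrite <- mseq_ratio; apply Rnot_ge_lt; intros Hge; eauto. }
  assert (Hbound : forall k, mseq mu k <= (/ t) ^ k).
  { induction k as [| k IHk].
    - unfold mseq; simpl; destruct Hmu as [-> _]; lra.
    - rewrite mseq_S; simpl pow.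
      assert (0 < mu (S k) / INR (S k)).
      { apply Rdiv_lt_0_compat; [pose proof (weight_sequence_ge1 (S k)); lra | apply lt_0_INR; lia]. }
      pose proof (mseq_pos k); specialize (Hsmall k).
      rewrite Rmult_comm; apply Rmult_le_compat; lra. }
  destruct (root_to_infty_gt_pow _ (/ t) Hroot mseq_pos ltac:(apply Rinv_0_lt_compat; lra))
    as [k Hk].
  specialize (Hbound k); lra.
Qed.

End WeightSequence.

Lemma Gamma_under_spec (m : nat -> R) (t : R) (k : nat) :
  m (S k) / m k >= / t ->
  m (S (Gamma_under m t)) / m (Gamma_under m t) >= / t.
Proof.
  intros Hk; unfold Gamma_under.
  match goal with |- context [epsilon ?i ?P] =>
    assert (HP : P (epsilon i P)) by (apply epsilon_spec; exact (least_witness _ k Hk)) end.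
  apply HP.
Qed.

Lemma h_fun_argmin (m : nat -> R) (t : R) (k : nat) :
  (forall j, m k * t ^ k <= m j * t ^ j) -> h_fun m t = m k * t ^ k.
Proof.
  intros Hmin; unfold h_fun.
  match goal with |- epsilon ?i ?P = _ =>
    assert (HP : P (epsilon i P))
      by (apply epsilon_spec; exists (m k * t ^ k); split; [exact Hmin | intros b Hb; apply Hb]) end.
  destruct HP as [Hlow Hgreatest].
  apply Rle_antisym; [apply Hlow | apply Hgreatest, Hmin].
Qed.

Lemma Gamma_bar_le_argmin (m : nat -> R) (t : R) (k : nat) :
  (forall j, m k * t ^ k <= m j * t ^ j) -> (Gamma_bar m t <= k)%nat.
Proof.
  intros Hmin; pose proof (h_fun_argmin m t k Hmin) as Hh.
  unfold Gamma_bar.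
  match goal with |- (epsilon ?i ?P <= _)%nat =>
    assert (HP : P (epsilon i P))
      by (apply epsilon_spec; exact (least_witness (fun j => h_fun m t = m j * t ^ j) k Hh)) end.
  destruct HP as [_ Hleast]; exact (Hleast k Hh).
Qed.

Theorem lemma3p3 (mu nu : nat -> R) (C : R) :
  weight_sequence mu -> weight_sequence nu ->
  root_to_infty (mseq mu) -> root_to_infty (mseq nu) ->
  1 <= C ->
  (forall j k : nat, (1 <= j)%nat -> (j <= k)%nat ->
     mu j / INR j <= C * (nu k / INR k)) ->
  forall t : R, 0 < t ->
    (Gamma_bar (mseq nu) (C * t) <= Gamma_under (mseq mu) t)%nat.
Proof.
  intros Hmu Hnu Hroot_mu _ HC Hcomp t Ht.
  set (k0 := Gamma_under (mseq mu) t).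
  assert (Hk0 : mu (S k0) / INR (S k0) >= / t).
  { rewrite <- mseq_ratio by exact Hmu.
    destruct (exists_ratio_ge_inv mu Hmu t Hroot_mu Ht) as [k Hk].
    exact (Gamma_under_spec _ _ k Hk). }
  assert (Hmono : forall i, (k0 <= i)%nat ->
            mseq nu i * (C * t) ^ i <= mseq nu (S i) * (C * t) ^ S i).
  { intros i Hi; apply mseq_pow_le_succ; [exact Hnu | nra |].
    specialize (Hcomp (S k0) (S i) ltac:(lia) ltac:(lia)).
    apply Rmult_le_compat_r with (r := t) in Hcomp; [| lra].
    assert (/ t * t = 1) by (field; lra).
    nra. }
  destruct (argmin_of_nondecreasing_from _ k0 Hmono) as [k [Hk Hmin]].
  pose proof (Gamma_bar_le_argmin _ _ k Hmin); lia.
Qed.
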